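(* Consider the linear family $F_\theta=\theta^\top\psi$, $\theta\in\Theta\subset\mathbb R^d$, and assume (A2) and (A4). Let $\Gamma_0(\theta)=\Lambda_0(F_\theta)-\pi^1(F_\theta)$ and $\Gamma(\theta)=\Gamma_0(\theta)+\tfrac12(v^\top\theta)^2$. Let $\theta^\circ$ be a minimizer of $\Gamma$, let $r^\circ=\varrho_a-\Lambda_0(F_{\theta^\circ})$ and $\theta^*=\theta^\circ+r^\circ v$, and suppose $\theta^*\in\Theta$. Then $\theta^*$ is a global minimizer over $\Theta$ of $\theta\mapsto\bar J^*_\infty(\kappa;\theta)$, for every $\kappa>1$.
   Context: Setting: $(\mathsf Y,\mathcal B)$ measurable space; $X^0,X^1$ mutually independent stationary $\mathsf Y$-valued processes with marginals $\pi^0,\pi^1$, independent of a change time $\tau_a$; $\nu(G)=\int G\,d\nu$. $\Lambda_0(G)=\lim_n\frac1n\log E[\exp(\sum_{k=0}^{n-1}G(X^0_k))]$. $\psi=(\psi^1,\dots,\psi^d):\mathsf Y\to\mathbb R^d$ is a fixed measurable function. (A2): for some $\varrho_a\in(0,\infty)$, $\lim_n\frac1n\log P\{\tau_a\ge n\}=-\varrho_a$. (A3) for a function $F$: with $\Upsilon_0(\vartheta)=\Lambda_0(\vartheta F)$, $F$ belongs to the class $\mathcal G$ (functions for which the cumulant generating functions for $X^0,X^1$ exist finitely and the twisted marginals, twisted processes and relative entropy rates exist); there exist $\vartheta_+>\vartheta_0>0$ with $\Upsilon_0(\vartheta_0)=0$, $\Upsilon_0(\vartheta_+)=\varrho_a$;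 $\Upsilon_0$ is finite and $C^1$ near $[0,\vartheta_+]$; $\vartheta F\in\mathcal G$ for $\vartheta$ near $[0,\vartheta_+]$. (A4) for the family $\{F_\theta\}$: $\Theta$ is open and $F_\theta$ satisfies (A3) for each $\theta$; (i) $\psi_\theta=\nabla_\theta F_\theta$ (here $=\psi$) has components in $\mathcal G$; (ii) $(\vartheta,\theta)\mapsto\Lambda_0(\vartheta F_\theta)$ is $C^1$ on a neighborhood of $\{(\vartheta,\theta):\vartheta\in[0,\vartheta_+^\theta],\theta\in\Theta\}$; (iii) there is $v\in\mathbb R^d$ with $v^\top\psi\equiv1$. Notation: $\vartheta_+^\theta>\vartheta_0^\theta>0$ solve $\Lambda_0(\vartheta_0^\theta F_\theta)=0$, $\Lambda_0(\vartheta_+^\theta F_\theta)=\varrho_a$; $m_1^\theta=\pi^1(F_\theta)$ (assumed positive); $\bar J^*_\infty(\kappa;\theta)=\frac{1}{m_1^\theta\vartheta_+^\theta}\log\kappa$. *)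

From HB Require Import structures.
From mathcomp Require Import all_boot all_order all_algebra.
From mathcomp Require Import all_classical all_reals all_analysis.
Set Implicit Arguments. Unset Strict Implicit. Unset Printing Implicit Defensive.
Import Order.TTheory GRing.Theory Num.Theory.
Import numFieldNormedType.Exports.
Local Open Scope classical_set_scope.
Local Open Scope ring_scope.

Section Defs.
Context {R : realType} {dO : measure_display} {Omega : measurableType dO}
  (P : probability Omega R) {dY : measure_display} {Y : measurableType dY}.

Definition cyl (X : nat -> Omega -> Y) (m n : nat) (A : nat -> set Y) : set Omega :=
  [set w | forall i, (i < n)%N -> A i (X (m + i)%N w)].

Definition stationary (X : nat -> Omega -> Y) : Prop :=
  forall (m n : nat) (A : nat -> set Y), (forall i, measurable (A i)) ->
    P (cyl X m n A) = P (cyl X 0 n A).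

Definition mutually_independent (X0 X1 : nat -> Omega -> Y) (tau : Omega -> nat) : Prop :=
  forall (n : nat) (A B : nat -> set Y) (C : set nat),
    (forall i, measurable (A i)) -> (forall i, measurable (B i)) ->
    P (cyl X0 0 n A `&` cyl X1 0 n B `&` (tau @^-1` C))
    = (P (cyl X0 0 n A) * P (cyl X1 0 n B) * P (tau @^-1` C))%E.

Definition marg (X : nat -> Omega -> Y) (G : Y -> R) : R :=
  fine (\int[P]_w (G (X 0%N w))%:E).

Definition marg_integrable (X : nat -> Omega -> Y) (G : Y -> R) : Prop :=
  P.-integrable setT (fun w => (G (X 0%N w))%:E).

Definition mgf_n (X : nat -> Omega -> Y) (G : Y -> R) (n : nat) : \bar R :=
  \int[P]_w (expR (\sum_(k < n) G (X k w)))%:E.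

Definition cgf_seq (X : nat -> Omega -> Y) (G : Y -> R) (n : nat) : R :=
  ln (fine (mgf_n X G n)) / n%:R.

Definition cgf_exists (X : nat -> Omega -> Y) (G : Y -> R) : Prop :=
  (\forall n \near \oo, (mgf_n X G n < +oo)%E) /\ cvgn (cgf_seq X G).

Definition cgf (X : nat -> Omega -> Y) (G : Y -> R) : R := limn (cgf_seq X G).

(* The class G: cumulant generating functions for X0, X1 exist finitely,
   the marginal integrals are defined, and the remaining (twisting / entropy)
   requirements are abstracted by the predicate Gextra. *)
Definition inG (Gextra : (Y -> R) -> Prop) (X0 X1 : nat -> Omega -> Y) (G : Y -> R) : Prop :=
  measurable_fun setT G /\ cgf_exists X0 G /\ cgf_exists X1 G /\
  marg_integrable X0 G /\ marg_integrable X1 G /\ Gextra G.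

Definition scalef (t : R) (F : Y -> R) : Y -> R := fun y => t * F y.

Definition is_tplus (X0 : nat -> Omega -> Y) (rho : R) (F : Y -> R) (t : R) : Prop :=
  exists t0, 0 < t0 /\ t0 < t /\
    cgf_exists X0 (scalef t0 F) /\ cgf X0 (scalef t0 F) = 0 /\
    cgf_exists X0 (scalef t F) /\ cgf X0 (scalef t F) = rho.

Definition A3 (Gextra : (Y -> R) -> Prop) (X0 X1 : nat -> Omega -> Y) (rho : R)
  (F : Y -> R) : Prop :=
  inG Gextra X0 X1 F /\
  exists tp, is_tplus X0 rho F tp /\
  exists eps : R, 0 < eps /\
    let Ups := fun t => cgf X0 (scalef t F) in
    (forall t, - eps < t < tp + eps ->
       [/\ cgf_exists X0 (scalef t F), derivable Ups t 1,
           (derive1 Ups x @[x --> t] --> derive1 Ups t)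
         & inG Gextra X0 X1 (scalef t F)]).

End Defs.

Definition dotv {R : realType} {d : nat} (a b : 'rV[R]_d) : R :=
  \sum_(i < d) a 0 i * b 0 i.

Definition Flin {R : realType} {T : Type} {d : nat} (psi : T -> 'rV[R]_d)
  (theta : 'rV[R]_d) : T -> R := fun y => dotv theta (psi y).

Definition Jbar {R : realType} (kappa m1 tp : R) : R := ln kappa / (m1 * tp).

From HB Require Import structures.
From mathcomp Require Import all_boot all_order all_algebra.
From mathcomp Require Import all_classical all_reals all_analysis.
From mathcomp Require Import measurable_realfun.
From mathcomp Require Import ring lra.
Set Implicit Arguments.
Unset Strict Implicit.
Unset Printing Implicit Defensive.
Import Order.TTheory GRing.Theory Num.Theory.
Import numFieldNormedType.Exports.
Local Open Scope classical_set_scope.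
Local Open Scope ring_scope.

(* Write t for the threshold [vartheta_+] of a direction theta.  Since F is linear in
   theta, F_(t theta) = t F_theta and Lambda_0(F_(t theta)) = rho.  Because
   v^T psi = 1, moving theta along v shifts Lambda_0(F_theta) and pi^1(F_theta) by
   the same amount, so min Gamma <= Lambda_0(F_theta) - pi^1(F_theta) for every
   theta; at t theta this reads Gamma(theta0) <= rho - t m_1(theta).  On the other
   hand theta* = theta0 + r0 v has Lambda_0(F_theta* ) = rho and
   m_1(theta* ) = pi^1(F_theta0) + r0 >= rho - Gamma(theta0), whence
   t m_1(theta) <= m_1(theta* ).  Finally the threshold of theta* is at least 1:
   s |-> Lambda_0(s F_theta* ) is convex (Hoelder) and takes the value 0 at some
   s0 > 0 and the value rho > 0 at both 1 and its threshold.  Hence the product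
   m_1 vartheta_+, which Jbar is decreasing in, is largest at theta*. *)

Lemma expR_convex {R : realType} (l u w : R) : 0 <= l <= 1 ->
  expR (l * u + (1 - l) * w) <= l * expR u + (1 - l) * expR w.
Proof.
move=> l01.
have l_i01 : Itv.spec (@Itv.num_sem R) (Itv.Real `[0%Z, 1%Z]) l.
  by rewrite /Itv.num_sem /= in_itv /= num_real.
by have := @convex_expR R (Itv.mk l_i01) u w; rewrite !convRE.
Qed.

(* Weighted AM-GM in the form that integrates to Hoelder's inequality for
   [E exp(l S1 + (1 - l) S2)]: take [a = E exp S1] and [b = E exp S2]. *)
Lemma expR_convex_weighted {R : realType} (l a b s1 s2 : R) :
  0 <= l <= 1 -> 0 < a -> 0 < b ->
  expR (l * s1 + (1 - l) * s2) <=
  expR (l * ln a + (1 - l) * ln b) * (l / a * expR s1 + (1 - l) / b * expR s2).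
Proof.
move=> l01 a0 b0.
set K := l * ln a + (1 - l) * ln b.
have := expR_convex (s1 - ln a) (s2 - ln b) l01.
have -> : l * (s1 - ln a) + (1 - l) * (s2 - ln b) = l * s1 + (1 - l) * s2 - K.
  by rewrite /K; ring.
clearbody K.
rewrite !expRD !expRN !lnK ?posrE // -ler_pdivrMl ?expR_gt0 //.
have -> : l / a * expR s1 + (1 - l) / b * expR s2 =
          l * (expR s1 / a) + (1 - l) * (expR s2 / b) by ring.
by rewrite mulrC.
Qed.

Lemma conv_between {R : realFieldType} (t0 t : R) : t0 < t -> t < 1 ->
  exists2 l, 0 < l <= 1 & t = l * t0 + (1 - l).
Proof.
move=> t0t t1; exists ((1 - t) / (1 - t0)); last by field; lra.
by rewrite divr_gt0 ?ler_pdivrMr ?mul1r /=; lra.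
Qed.

Section cumulant_generating_function.
Context {R : realType} {dO : measure_display} {Omega : measurableType dO}
  (P : probability Omega R) {dY : measure_display} {Y : measurableType dY}.
Variable X : nat -> Omega -> Y.
Hypothesis mX : forall k, measurable_fun setT (X k).

Lemma measurable_expR_sum (G : Y -> R) n : measurable_fun setT G ->
  measurable_fun setT (fun w => expR (\sum_(k < n) G (X k w))).
Proof.
move=> mG; apply: measurableT_comp; first exact: measurable_expR.
by apply: measurable_sum => k; exact: measurableT_comp mG (mX k).
Qed.

Lemma mgf_n_gt0 (G : Y -> R) n : measurable_fun setT G -> (0 < mgf_n P X G n)%E.
Proof.
move=> mG.
have mE : measurable_fun setT (fun w => (expR (\sum_(k < n) G (X k w)))%:E).
  exact/measurable_EFinP/measurable_expR_sum.
rewrite /mgf_n lt0e integral_ge0 ?andbT; last by move=> w _; rewrite lee_fin expR_ge0.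
apply/negP => /eqP mgf0.
have : (\int[P]_w `|(expR (\sum_(k < n) G (X k w)))%:E|)%E = 0%E.
  by rewrite -mgf0; apply: eq_integral => w _; rewrite gee0_abs // lee_fin expR_ge0.
move/(ae_eq_integral_abs _ measurableT mE) => [N [mN N0 sN]].
have : (P setT <= P N)%E.
  apply: le_measure; rewrite ?inE //.
  by move=> w _; apply: sN => /= /(_ I) /eqP; rewrite eqe gt_eqF // expR_gt0.
by rewrite N0 probability_setT lee_fin ler10.
Qed.

Lemma mgf_n_fineK (G : Y -> R) n : measurable_fun setT G ->
  (mgf_n P X G n < +oo)%E -> (fine (mgf_n P X G n))%:E = mgf_n P X G n.
Proof. by move=> mG lt; rewrite fineK // ge0_fin_numE // ltW // mgf_n_gt0. Qed.

Lemma mgf_n_shift (G : Y -> R) (c : R) n : measurable_fun setT G ->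
  mgf_n P X (fun y => G y + c) n = ((expR (n%:R * c))%:E * mgf_n P X G n)%E.
Proof.
move=> mG; rewrite /mgf_n -ge0_integralZl_EFin ?expR_ge0 //;
  last exact/measurable_EFinP/measurable_expR_sum.
apply: eq_integral => w _; rewrite -EFinM -expRD big_split /= sumr_const card_ord.
by rewrite addrC mulr_natl.
Qed.

Lemma integral_expR_comb (k1 k2 : R) (S1 S2 : Omega -> R) : 0 <= k1 -> 0 <= k2 ->
  measurable_fun setT (fun w => expR (S1 w)) -> measurable_fun setT (fun w => expR (S2 w)) ->
  (\int[P]_w (k1 * expR (S1 w) + k2 * expR (S2 w))%R%:E =
   k1%:E * \int[P]_w (expR (S1 w))%:E + k2%:E * \int[P]_w (expR (S2 w))%:E)%E.
Proof.
move=> k10 k20 mS1 mS2; under eq_integral do rewrite EFinD.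
rewrite ge0_integralD //; first last.
- by apply/measurable_EFinP/measurable_funM => //; exact: measurable_cst.
- by move=> w _; rewrite lee_fin mulr_ge0 ?expR_ge0.
- by apply/measurable_EFinP/measurable_funM => //; exact: measurable_cst.
- by move=> w _; rewrite lee_fin mulr_ge0 ?expR_ge0.
under eq_integral do rewrite EFinM; under [X in (_ + X)%E]eq_integral do rewrite EFinM.
by rewrite !ge0_integralZl_EFin //; exact/measurable_EFinP.
Qed.

Lemma mgf_n_convex (G1 G2 : Y -> R) (l : R) n :
  measurable_fun setT G1 -> measurable_fun setT G2 -> 0 <= l <= 1 ->
  (mgf_n P X G1 n < +oo)%E -> (mgf_n P X G2 n < +oo)%E ->
  (mgf_n P X (fun y => (l * G1 y + (1 - l) * G2 y)%R) n <=
   (expR (l * ln (fine (mgf_n P X G1 n)) + (1 - l) * ln (fine (mgf_n P X G2 n))))%:E)%E.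
Proof.
move=> mG1 mG2 l01 fin1 fin2; have /andP[l0 l1] := l01.
have A1 := mgf_n_fineK mG1 fin1; have A2 := mgf_n_fineK mG2 fin2.
move: A1 A2; set a := fine _; set b := fine _ => A1 A2.
have a0 : 0 < a by rewrite -lte_fin A1 mgf_n_gt0.
have b0 : 0 < b by rewrite -lte_fin A2 mgf_n_gt0.
have mC : measurable_fun setT (fun y => l * G1 y + (1 - l) * G2 y).
  by apply: measurable_funD; apply: measurable_funM => //; exact: measurable_cst.
set K := l * ln a + (1 - l) * ln b.
set k1 := expR K * (l / a); set k2 := expR K * ((1 - l) / b).
have k10 : 0 <= k1 by rewrite mulr_ge0 ?expR_ge0 // divr_ge0 // ltW.
have k20 : 0 <= k2 by rewrite mulr_ge0 ?expR_ge0 // divr_ge0 ?subr_ge0 // ltW.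
rewrite /mgf_n; apply: (@le_trans _ _ (\int[P]_w
  (k1 * expR (\sum_(k < n) G1 (X k w)) + k2 * expR (\sum_(k < n) G2 (X k w)))%R%:E)%E).
  apply: ge0_le_integral => //.
  - exact/measurable_EFinP/(measurable_expR_sum _ mC).
  - by apply/measurable_EFinP/measurable_funD; apply: measurable_funM => //;
      exact: measurable_expR_sum.
  - move=> w _; rewrite lee_fin big_split /= -!mulr_sumr.
    apply: le_trans (expR_convex_weighted _ _ l01 a0 b0) _.
    by rewrite /k1 /k2 mulrDr !mulrA.
rewrite integral_expR_comb //; [|exact: measurable_expR_sum..].
rewrite -/(mgf_n P X G1 n) -/(mgf_n P X G2 n) -A1 -A2 -!EFinM -EFinD lee_fin.
by rewrite /k1 /k2 -!(mulrA (expR K)) !divfK ?gt_eqF // -mulrDr subrKC mulr1.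
Qed.

Lemma cgf_seq_shift (G : Y -> R) (c : R) n : measurable_fun setT G -> (0 < n)%N ->
  (mgf_n P X G n < +oo)%E ->
  cgf_seq P X (fun y => G y + c) n = cgf_seq P X G n + c.
Proof.
move=> mG n0 fin; rewrite /cgf_seq mgf_n_shift // -(mgf_n_fineK mG fin) -EFinM /=.
have m0 : 0 < fine (mgf_n P X G n) by apply: fine_gt0; rewrite mgf_n_gt0.
rewrite lnM ?posrE ?expR_gt0 // expRK mulrDl addrC mulrAC mulfV ?mul1r //.
by rewrite pnatr_eq0 -lt0n.
Qed.

Lemma cgf_seq_convex (G1 G2 : Y -> R) (l : R) n :
  measurable_fun setT G1 -> measurable_fun setT G2 -> 0 <= l <= 1 ->
  (mgf_n P X G1 n < +oo)%E -> (mgf_n P X G2 n < +oo)%E ->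
  cgf_seq P X (fun y => l * G1 y + (1 - l) * G2 y) n <=
  l * cgf_seq P X G1 n + (1 - l) * cgf_seq P X G2 n.
Proof.
move=> mG1 mG2 l01 fin1 fin2.
have mC : measurable_fun setT (fun y => l * G1 y + (1 - l) * G2 y).
  by apply: measurable_funD; apply: measurable_funM => //; exact: measurable_cst.
have le := mgf_n_convex mG1 mG2 l01 fin1 fin2.
have finC := le_lt_trans le (ltry _).
have M0 : 0 < fine (mgf_n P X (fun y => l * G1 y + (1 - l) * G2 y) n).
  by rewrite -lte_fin mgf_n_fineK // mgf_n_gt0.
rewrite /cgf_seq !mulrA -mulrDl ler_wpM2r ?invr_ge0 //.
rewrite -[leRHS]expRK ler_ln ?posrE ?expR_gt0 //.
by rewrite -lee_fin mgf_n_fineK.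
Qed.

Lemma cvg_cgf_seq_shift (G : Y -> R) (c : R) : measurable_fun setT G -> cgf_exists P X G ->
  cgf_seq P X (fun y => G y + c) n @[n --> \oo] --> cgf P X G + c.
Proof.
move=> mG [fin cv]; apply: cvg_trans (cvgD cv (cvg_cst c)).
apply: near_eq_cvg; near=> n; rewrite cgf_seq_shift //; last by near: n.
by near: n; exists 1%N.
Unshelve. all: by end_near.
Qed.

Lemma cgf_exists_shift (G : Y -> R) (c : R) : measurable_fun setT G -> cgf_exists P X G ->
  cgf_exists P X (fun y => G y + c).
Proof.
move=> mG cG; split; last exact: cvgP (cvg_cgf_seq_shift mG cG).
case: cG => fin _; near=> n; rewrite mgf_n_shift // -ge0_fin_numE; last first.
  by rewrite mule_ge0 ?lee_fin ?expR_ge0 // ltW // mgf_n_gt0.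
by rewrite fin_numM // ge0_fin_numE; [near: n|exact/ltW/mgf_n_gt0].
Unshelve. all: by end_near.
Qed.

Lemma cgf_shift (G : Y -> R) (c : R) : measurable_fun setT G -> cgf_exists P X G ->
  cgf P X (fun y => G y + c) = cgf P X G + c.
Proof. by move=> mG cG; exact: cvg_lim (cvg_cgf_seq_shift mG cG). Qed.

Lemma cgf_convex (G1 G2 : Y -> R) (l : R) :
  measurable_fun setT G1 -> measurable_fun setT G2 -> 0 <= l <= 1 ->
  cgf_exists P X G1 -> cgf_exists P X G2 ->
  cgf_exists P X (fun y => l * G1 y + (1 - l) * G2 y) ->
  cgf P X (fun y => l * G1 y + (1 - l) * G2 y) <= l * cgf P X G1 + (1 - l) * cgf P X G2.
Proof.
move=> mG1 mG2 l01 [fin1 cv1] [fin2 cv2] [_ cv].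
have cvC : (l * cgf_seq P X G1 n + (1 - l) * cgf_seq P X G2 n) @[n --> \oo] -->
    l * cgf P X G1 + (1 - l) * cgf P X G2.
  exact: cvgD (cvgM (cvg_cst l) cv1) (cvgM (cvg_cst (1 - l)) cv2).
rewrite -(cvg_lim _ cvC) //; apply: ler_lim => //; first exact: cvgP cvC.
by near=> n; apply: cgf_seq_convex => //; near: n.
Unshelve. all: by end_near.
Qed.

Lemma is_tplus_gt0 (F : Y -> R) (rho t : R) : is_tplus P X rho F t -> 0 < t.
Proof. by move=> [t0 [t00 [t0t _]]]; exact: lt_trans t0t. Qed.

Lemma is_tplus_ge1 (F : Y -> R) (rho t : R) : measurable_fun setT F -> 0 < rho ->
  cgf_exists P X F -> cgf P X F = rho -> is_tplus P X rho F t -> 1 <= t.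
Proof.
move=> mF rho0 cF cFrho [t0 [_ [t0t [ct0 [cgf_t0 [ct cgf_t]]]]]].
rewrite leNgt; apply/negP => t1.
have [l /andP[l0 l1] tE] := conv_between t0t t1.
have t_comb : scalef t F = (fun y => l * scalef t0 F y + (1 - l) * F y).
  by apply: funext => y; rewrite /scalef tE; ring.
have mt0F : measurable_fun setT (scalef t0 F).
  by apply: measurable_funM => //; exact: measurable_cst.
have := cgf_convex mt0F mF (introT andP (conj (ltW l0) l1)) ct0 cF.
rewrite -t_comb cgf_t0 cgf_t cFrho mulr0 add0r => /(_ ct).
by rewrite ler_pMl // -subr_ge0 addrAC subrr add0r oppr_ge0 leNgt l0.
Qed.

End cumulant_generating_function.

Section dot_product.
Context {R : realType} {d : nat}.
Implicit Types (a b c : 'rV[R]_d) (k : R).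

Lemma dotvC a b : dotv a b = dotv b a.
Proof. by apply: eq_bigr => i _; rewrite mulrC. Qed.

Lemma dotvDl a b c : dotv (a + b) c = dotv a c + dotv b c.
Proof. by rewrite /dotv -big_split; apply: eq_bigr => i _; rewrite mxE mulrDl. Qed.

Lemma dotvZl k a b : dotv (k *: a) b = k * dotv a b.
Proof. by rewrite /dotv mulr_sumr; apply: eq_bigr => i _; rewrite mxE mulrA. Qed.

Lemma dotvDr a b c : dotv a (b + c) = dotv a b + dotv a c.
Proof. by rewrite !(dotvC a) dotvDl. Qed.

Lemma dotvZr k a b : dotv a (k *: b) = k * dotv a b.
Proof. by rewrite !(dotvC a) dotvZl. Qed.

Lemma dotv0l b : dotv 0 b = 0.
Proof. by rewrite -(scale0r 0) dotvZl mul0r. Qed.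

Lemma dotvv_eq0 a : dotv a a = 0 -> a = 0.
Proof.
move=> aa0; apply/rowP => i; rewrite mxE; apply/eqP; rewrite -sqrf_eq0 expr2.
have sq_ge0 (j : 'I_d) : xpredT j -> 0 <= a 0 j * a 0 j by rewrite -expr2 sqr_ge0.
by apply/eqP; exact: psumr_eq0P sq_ge0 aa0 i isT.
Qed.

End dot_product.

Lemma Flin_shift {R : realType} {T : Type} {d : nat} (psi : T -> 'rV[R]_d) v th c :
  (forall y, dotv v (psi y) = 1) -> Flin psi (th + c *: v) = (fun y => Flin psi th y + c).
Proof. by move=> psi_v; apply: funext => y; rewrite /Flin dotvDl dotvZl psi_v mulr1. Qed.

Section marginal.
Context {R : realType} {dO : measure_display} {Omega : measurableType dO}
  (P : probability Omega R) {dY : measure_display} {Y : measurableType dY}.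
Variable X : nat -> Omega -> Y.

Lemma measurable_Flin {d : nat} (psi : Y -> 'rV[R]_d) th :
  (forall i, measurable_fun setT (fun y => psi y 0 i)) -> measurable_fun setT (Flin psi th).
Proof.
move=> mpsi; apply: measurable_sum => i.
by apply: measurable_funM => //; exact: measurable_cst.
Qed.

Lemma Flin_scale {d : nat} (psi : Y -> 'rV[R]_d) t th :
  Flin psi (t *: th) = scalef t (Flin psi th).
Proof. by apply: funext => y; rewrite /Flin /scalef dotvZl. Qed.

Lemma marg_integrable_Flin {d : nat} (psi : Y -> 'rV[R]_d) th :
  (forall i, marg_integrable P X (fun y => psi y 0 i)) -> marg_integrable P X (Flin psi th).
Proof.
move=> ipsi; rewrite /marg_integrable /Flin /dotv.
under eq_fun do rewrite -sumEFin.
apply: integrable_sum => // i _; under eq_fun do rewrite EFinM.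
exact/integrableZl/ipsi.
Qed.

Lemma margZ (G : Y -> R) t : marg_integrable P X G ->
  marg P X (scalef t G) = t * marg P X G.
Proof.
move=> iG; rewrite /marg /scalef; under eq_integral do rewrite EFinM.
by rewrite integralZl // -(fineK (integrable_fin_num measurableT iG)).
Qed.

Lemma marg_shift (G : Y -> R) c : marg_integrable P X G ->
  marg P X (fun y => G y + c) = marg P X G + c.
Proof.
move=> iG; rewrite /marg; under eq_integral do rewrite EFinD.
rewrite integralD //; last exact: finite_measure_integrable_cst.
rewrite integral_cst // [X in (c%:E * X)%E]probability_setT mule1.
by rewrite -(fineK (integrable_fin_num measurableT iG)).
Qed.

End marginal.

Lemma dotvv_neq0 {R : realType} {d : nat} (v b : 'rV[R]_d) : dotv v b != 0 -> dotv v v != 0.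
Proof. by apply: contraNneq => /dotvv_eq0 ->; rewrite dotv0l. Qed.

Lemma probability_nonempty {R : realType} {d : measure_display} {T : measurableType d}
  (P : probability T R) : [set: T] !=set0.
Proof.
apply/set0P/eqP => T0; have := probability_setT P.
by rewrite T0 measure0 => /eqP; rewrite eq_sym onee_eq0.
Qed.

Section Gamma_minimizer.
Context {R : realType} {dO : measure_display} {Omega : measurableType dO}
  (P : probability Omega R) {dY : measure_display} {Y : measurableType dY}.
Variables (X0 X1 : nat -> Omega -> Y) (d : nat) (psi : Y -> 'rV[R]_d) (v : 'rV[R]_d).
Hypothesis mX0 : forall k, measurable_fun setT (X0 k).
Hypothesis mpsi : forall i, measurable_fun setT (fun y => psi y 0 i).
Hypothesis ipsi : forall i, marg_integrable P X1 (fun y => psi y 0 i).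
Hypothesis psi_v : forall y, dotv v (psi y) = 1.

Let mF th : measurable_fun setT (Flin psi th) := measurable_Flin th mpsi.
Let iF th : marg_integrable P X1 (Flin psi th) := marg_integrable_Flin th ipsi.

Definition Gamma th := cgf P X0 (Flin psi th) - marg P X1 (Flin psi th) + dotv v th ^+ 2 / 2.

Lemma cgf_exists_Flin_shift th c : cgf_exists P X0 (Flin psi th) ->
  cgf_exists P X0 (Flin psi (th + c *: v)).
Proof. by rewrite (Flin_shift th c psi_v); exact: cgf_exists_shift (mF th). Qed.

Lemma cgf_Flin_shift th c : cgf_exists P X0 (Flin psi th) ->
  cgf P X0 (Flin psi (th + c *: v)) = cgf P X0 (Flin psi th) + c.
Proof. by rewrite (Flin_shift th c psi_v); exact: cgf_shift (mF th). Qed.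

Lemma marg_Flin_shift th c : marg P X1 (Flin psi (th + c *: v)) = marg P X1 (Flin psi th) + c.
Proof. by rewrite (Flin_shift th c psi_v); exact: marg_shift (iF th). Qed.

Lemma Gamma_le_cgf_sub_marg th0 th : dotv v v != 0 ->
  (forall th', cgf_exists P X0 (Flin psi th') -> Gamma th0 <= Gamma th') ->
  cgf_exists P X0 (Flin psi th) ->
  Gamma th0 <= cgf P X0 (Flin psi th) - marg P X1 (Flin psi th).
Proof.
move=> vv0 Gamma_min cth; set c := - (dotv v th / dotv v v).
have := Gamma_min _ (cgf_exists_Flin_shift c cth).
rewrite /Gamma (cgf_Flin_shift c cth) marg_Flin_shift dotvDr dotvZr /c mulNr divfK //.
by rewrite subrr expr0n /= mul0r addr0 opprD addrACA subrr addr0.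
Qed.

Variables (rho : R) (theta0 : 'rV[R]_d).
Hypothesis cgf_exists_theta0 : cgf_exists P X0 (Flin psi theta0).
Hypothesis Gamma_min : forall th, cgf_exists P X0 (Flin psi th) -> Gamma theta0 <= Gamma th.
Let thetas := theta0 + (rho - cgf P X0 (Flin psi theta0)) *: v.

Lemma cgf_exists_thetas : cgf_exists P X0 (Flin psi thetas).
Proof. exact: cgf_exists_Flin_shift _ cgf_exists_theta0. Qed.

Lemma cgf_thetas : cgf P X0 (Flin psi thetas) = rho.
Proof. by rewrite (cgf_Flin_shift _ cgf_exists_theta0) addrC subrK. Qed.

Lemma tplus_mul_marg_le th tp : dotv v v != 0 -> is_tplus P X0 rho (Flin psi th) tp ->
  tp * marg P X1 (Flin psi th) <= marg P X1 (Flin psi thetas).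
Proof.
move=> vv0 [_ [_ [_ [_ [_ [ctp cgf_tp]]]]]]; rewrite -Flin_scale in ctp cgf_tp.
have := Gamma_le_cgf_sub_marg vv0 Gamma_min ctp.
rewrite cgf_tp Flin_scale (margZ tp (iF th)) /thetas marg_Flin_shift.
have : cgf P X0 (Flin psi theta0) - marg P X1 (Flin psi theta0) <= Gamma theta0.
  by rewrite lerDl divr_ge0 ?sqr_ge0.
move: (Gamma theta0) (cgf _ _ _) (marg _ _ (Flin psi theta0)) (tp * _) => g a m q.
lra.
Qed.

End Gamma_minimizer.

Lemma Jbar_le {R : realType} (kappa m t m' t' : R) : 1 < kappa ->
  0 < m * t -> m * t <= m' * t' -> Jbar kappa m' t' <= Jbar kappa m t.
Proof.
move=> kappa1 mt0 le_mt; have lnk0 : 0 <= ln kappa by exact/ln_ge0/ltW.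
by rewrite /Jbar ler_wpM2l // lef_pV2 ?posrE //; exact: lt_le_trans le_mt.
Qed.

Theorem propositiont (R : realType) (dO : measure_display) (Omega : measurableType dO)
  (P : probability Omega R) (dY : measure_display) (Y : measurableType dY)
  (X0 X1 : nat -> Omega -> Y) (tau : Omega -> nat) (rho : R)
  (Gextra : (Y -> R) -> Prop)
  (d : nat) (psi : Y -> 'rV[R]_d) (Theta : set 'rV[R]_d) (v : 'rV[R]_d)
  (theta0 : 'rV[R]_d) :
  (* standing setting *)
  (forall k, measurable_fun setT (X0 k)) -> (forall k, measurable_fun setT (X1 k)) ->
  measurable_fun setT tau ->
  stationary P X0 -> stationary P X1 -> mutually_independent P X0 X1 tau ->
  (* (A2) *)
  0 < rho ->
  (fun n : nat => ln (fine (P [set w | (n <= tau w)%N])) / n%:R) @ \oo --> - rho ->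
  (* (A4) *)
  open Theta ->
  (forall theta, Theta theta -> A3 P Gextra X0 X1 rho (Flin psi theta)) ->
  (forall i : 'I_d, inG P Gextra X0 X1 (fun y => psi y 0 i)) ->
  (exists W : set (R * 'rV[R]_d), open W /\
     (forall theta tp, Theta theta -> is_tplus P X0 rho (Flin psi theta) tp ->
        forall t, 0 <= t <= tp -> W (t, theta)) /\
     let g := fun p : R * 'rV[R]_d => cgf P X0 (scalef p.1 (Flin psi p.2)) in
     (forall p, W p -> cgf_exists P X0 (scalef p.1 (Flin psi p.2))) /\
     (forall p, W p -> differentiable g p) /\
     (forall p h, W p -> ('d g q h @[q --> p] --> 'd g p h))) ->
  (forall y, dotv v (psi y) = 1) ->
  (* m_1^theta > 0 *)
  (forall theta, Theta theta -> 0 < marg P X1 (Flin psi theta)) ->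
  (* theta0 is a minimizer of Gamma *)
  let Gamma := fun theta => cgf P X0 (Flin psi theta) - marg P X1 (Flin psi theta)
                            + (dotv v theta) ^+ 2 / 2 in
  cgf_exists P X0 (Flin psi theta0) ->
  (forall theta, cgf_exists P X0 (Flin psi theta) -> Gamma theta0 <= Gamma theta) ->
  let r0 := rho - cgf P X0 (Flin psi theta0) in
  let thetas := theta0 + r0 *: v in
  Theta thetas ->
  forall kappa : R, 1 < kappa ->
  forall theta tp tps, Theta theta ->
    is_tplus P X0 rho (Flin psi theta) tp ->
    is_tplus P X0 rho (Flin psi thetas) tps ->
    Jbar kappa (marg P X1 (Flin psi thetas)) tps <= Jbar kappa (marg P X1 (Flin psi theta)) tp.
Proof.
move=> mX0 _ _ _ _ _ rho0 _ _ _ Hpsi _ psi_v m1_gt0 Gamma cg0 Gamma_min r0 thetas Ths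
  kappa kappa1 theta tp tps Th Htp Htps.
have mpsi i : measurable_fun setT (fun y => psi y 0 i) by case: (Hpsi i).
have ipsi i : marg_integrable P X1 (fun y => psi y 0 i) by case: (Hpsi i) => _ [_ [_ [_ []]]].
have vv0 : dotv v v != 0.
  have [w _] := probability_nonempty P.
  by apply: (@dotvv_neq0 _ _ v (psi (X0 0%N w))); rewrite psi_v oner_neq0.
have le_marg := tplus_mul_marg_le mX0 mpsi ipsi psi_v Gamma_min vv0 Htp.
have tps_ge1 := is_tplus_ge1 mX0 (measurable_Flin thetas mpsi) rho0
  (cgf_exists_thetas mX0 mpsi psi_v rho cg0) (cgf_thetas mX0 mpsi psi_v rho cg0) Htps.
apply: Jbar_le kappa1 _ _; first by rewrite mulr_gt0 ?m1_gt0 // (is_tplus_gt0 Htp).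
rewrite mulrC (le_trans le_marg) // ler_peMr //.
exact/ltW/m1_gt0.
Qed.
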